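(* Let $\mathcal{H}$ be a complex Hilbert space and $T\in\mathbb{B}(\mathcal{H})$. Then \[ \|T+TT^*T\|=\|T\|+\|T\|^3 . \] Moreover, if $T\neq 0$ and either $\operatorname{dist}(T,\mathbb{K}(\mathcal{H}))<\|T\|$ or $\operatorname{dist}(TT^*T,\mathbb{K}(\mathcal{H}))<\|TT^*T\|$, then there exists a unit vector $x_o\in\mathcal{H}$ such that \[ \frac{T}{\|T\|}x_o=\frac{TT^*T}{\|TT^*T\|}x_o,\qquad \|Tx_o\|=\|T\|,\qquad \|TT^*Tx_o\|=\|TT^*T\|. \]
   Context: $\mathbb{B}(\mathcal{H})$ denotes the $C^*$-algebra of bounded linear operators on $\mathcal{H}$ with the operator norm, $\mathbb{K}(\mathcal{H})$ the ideal of compact operators, and $\operatorname{dist}(S,\mathbb{K}(\mathcal{H}))=\inf\{\|S-K\|:K\in\mathbb{K}(\mathcal{H})\}$. *)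

From HB Require Import structures.
From mathcomp Require Import all_boot all_order all_algebra.
From mathcomp Require Import complex.
From mathcomp Require Import boolp classical_sets reals.

Set Implicit Arguments.
Unset Strict Implicit.
Unset Printing Implicit Defensive.
Import Order.TTheory GRing.Theory Num.Theory.
Local Open Scope ring_scope.
Local Open Scope classical_set_scope.

Definition rC (R : realType) (r : R) : R[i] := (r%:C)%C.

Section Hilbert.
Variables (R : realType) (V : lmodType R[i]) (ip : V -> V -> R[i]).

Definition hnorm (x : V) : R := Num.sqrt (@complex.Re R (ip x x)).

Definition cauchy_seq (u : nat -> V) : Prop :=
  forall e : R, 0 < e -> exists N : nat, forall m n : nat,
    (N <= m)%N -> (N <= n)%N -> hnorm (u m - u n) < e.

Definition converges_to (u : nat -> V) (l : V) : Prop :=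
  forall e : R, 0 < e -> exists N : nat, forall n : nat,
    (N <= n)%N -> hnorm (u n - l) < e.

Record is_hilbert : Prop := {
  ip_linl : forall (a : R[i]) (x y z : V), ip (a *: x + y) z = a * ip x z + ip y z;
  ip_conj : forall x y : V, ip y x = ((ip x y)^*)%C;
  ip_ge0 : forall x : V, 0 <= ip x x;
  ip_def : forall x : V, ip x x = 0 -> x = 0;
  ip_complete : forall u : nat -> V, cauchy_seq u -> exists l : V, converges_to u l
}.

Definition bounded_op (T : V -> V) : Prop :=
  exists M : R, forall x : V, hnorm (T x) <= M * hnorm x.

Definition opnorm (T : V -> V) : R :=
  sup [set r : R | exists x : V, hnorm x <= 1 /\ r = hnorm (T x)].

Definition compact_op (K : V -> V) : Prop :=
  forall u : nat -> V, (exists M : R, forall n, hnorm (u n) <= M) ->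
    exists phi : nat -> nat, (forall n, (phi n < phi n.+1)%N) /\
      exists l : V, converges_to (fun n => K (u (phi n))) l.

Definition dist_compact (S : V -> V) : R :=
  inf [set r : R | exists K : {linear V -> V},
         bounded_op K /\ compact_op K /\ r = opnorm (fun x => S x - K x)].

End Hilbert.

From HB Require Import structures.
From mathcomp Require Import all_boot all_order all_algebra.
From mathcomp Require Import complex.
From mathcomp Require Import boolp classical_sets reals.
From mathcomp Require Import ring lra.
Import Order.TTheory GRing.Theory Num.Theory.
Set Implicit Arguments.
Unset Strict Implicit.
Local Open Scope ring_scope.
Local Open Scope classical_set_scope.

(* Write g = ||T|| and T' for the adjoint of T.  For every x the estimate
     ||T'T x - g^2 x||^2 <= g^2 (g^2 ||x||^2 - ||T x||^2)
   shows that a unit vector with ||T x|| close to g is an approximate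
   eigenvector of T'T for g^2, so that T T'T x is close to g^2 T x.  Along a
   maximizing sequence this gives ||T T'T|| = g^3 and ||T + T T'T|| = g + g^3.
   For the second part let G be T or T T'T (whose adjoint is T'T T') and K a
   compact operator with c = ||G - K|| < ||G||.  Pass to a maximizing sequence
   of G on which K converges; for differences w of its terms,
     ||G||^2 ||w||^2 <= ||G w||^2 + ||w|| ||G'G w - ||G||^2 w||  and
     ||G w|| <= c ||w|| + ||K w||,
   so the gap ||G||^2 - c^2 makes the sequence Cauchy.  Its limit attains the
   norm of G, hence that of T, and a unit vector attaining ||T|| is an exact
   eigenvector of T'T for g^2, which gives T T'T x = g^2 T x. *)

Lemma ler_add_scaled_eps (R : realFieldType) (x y c : R) :
  0 <= c -> (forall e, 0 < e -> x <= y + c * e) -> x <= y.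
Proof.
move=> c0 le_xy; apply/ler_addgt0Pr => e e0.
have c1 : 0 < c + 1 by lra.
apply: le_trans (le_xy _ (divr_gt0 e0 c1)) _; rewrite lerD2l.
have := divfK (lt0r_neq0 c1) e; have := divr_gt0 e0 c1; nra.
Qed.

Lemma eventually_inv_lt (R : realType) (e : R) :
  0 < e -> exists k, forall n, (k <= n)%N -> n.+1%:R^-1 < e.
Proof.
move=> e0; have [k] := ltr_add_invr e0; rewrite add0r => ltke.
exists k => n le_kn; apply: le_lt_trans ltke.
by rewrite lef_pV2 ?posrE ?ltr0Sn // ler_nat.
Qed.

Section RealInnerProduct.
Variables (R : realType) (V : lmodType R[i]) (ip : V -> V -> R[i]).
Hypothesis hH : is_hilbert ip.
Local Notation nrm := (hnorm ip).
Implicit Types (x y z : V) (r : R).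

Definition ipr x y : R := complex.Re (ip x y).

Lemma ipDl x y z : ip (x + y) z = ip x z + ip y z.
Proof. by have := ip_linl hH 1 x y z; rewrite scale1r mul1r. Qed.

Lemma ip0l z : ip 0 z = 0.
Proof. by apply: (addrI (ip 0 z)); rewrite -ipDl !addr0. Qed.

Lemma iprDl x y z : ipr (x + y) z = ipr x z + ipr y z.
Proof. by rewrite /ipr ipDl; case: (ip x z); case: (ip y z). Qed.

Lemma iprZl r x z : ipr (rC r *: x) z = r * ipr x z.
Proof.
have := ip_linl hH (rC r) x 0 z; rewrite addr0 ip0l addr0 /ipr => ->.
by case: (ip x z) => a b; rewrite /rC /= mul0r subr0.
Qed.

Lemma iprC x y : ipr x y = ipr y x.
Proof. by rewrite /ipr (ip_conj hH x y); case: (ip x y). Qed.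

Lemma iprNl x z : ipr (- x) z = - ipr x z.
Proof.
by rewrite -scaleN1r -[-1](rmorphN1 (real_complex R)) iprZl mulN1r.
Qed.

Lemma iprBl x y z : ipr (x - y) z = ipr x z - ipr y z.
Proof. by rewrite iprDl iprNl. Qed.

Lemma iprDr x y z : ipr z (x + y) = ipr z x + ipr z y.
Proof. by rewrite iprC iprDl !(iprC z). Qed.

Lemma iprBr x y z : ipr z (x - y) = ipr z x - ipr z y.
Proof. by rewrite iprC iprBl !(iprC z). Qed.

Lemma iprZr r x z : ipr z (rC r *: x) = r * ipr z x.
Proof. by rewrite iprC iprZl iprC. Qed.

Lemma ipr_ge0 x : 0 <= ipr x x.
Proof. by have := ip_ge0 hH x; rewrite lecE => /andP[]. Qed.

Lemma hnorm_sqr x : nrm x ^+ 2 = ipr x x.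
Proof. by rewrite sqr_sqrtr // ipr_ge0. Qed.

Lemma hnorm_ge0 x : 0 <= nrm x.
Proof. exact: sqrtr_ge0. Qed.

Lemma hnorm_eq0 x : nrm x = 0 -> x = 0.
Proof.
move=> nx0; apply: (ip_def hH).
have := ip_ge0 hH x; have := hnorm_sqr x; rewrite nx0 expr0n /ipr lecE.
by case: (ip x x) => a b /= <- /andP[/eqP -> _].
Qed.

Lemma hnorm0 : nrm 0 = 0.
Proof. by rewrite /hnorm ip0l sqrtr0. Qed.

Lemma hnormD_sqr x y : nrm (x + y) ^+ 2 = nrm x ^+ 2 + 2 * ipr x y + nrm y ^+ 2.
Proof. by rewrite !hnorm_sqr iprDl !iprDr (iprC y x); lra. Qed.

Lemma hnormB_sqr x y : nrm (x - y) ^+ 2 = nrm x ^+ 2 - 2 * ipr x y + nrm y ^+ 2.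
Proof. by rewrite !hnorm_sqr iprBl !iprBr (iprC y x); lra. Qed.

Lemma hnormZ r x : 0 <= r -> nrm (rC r *: x) = r * nrm x.
Proof.
move=> r0; apply/eqP; rewrite -(eqrXn2 (_ : 0 < 2)%N) ?mulr_ge0 ?hnorm_ge0 //.
by rewrite exprMn !hnorm_sqr iprZl iprZr mulrA.
Qed.

Lemma hnormN x : nrm (- x) = nrm x.
Proof.
apply/eqP; rewrite -(eqrXn2 (_ : 0 < 2)%N) ?hnorm_ge0 //.
by rewrite !hnorm_sqr iprNl iprC iprNl opprK.
Qed.

Lemma ipr_le_hnorm x y : ipr x y <= nrm x * nrm y.
Proof.
have [y0 | ] := eqVneq y 0; first by rewrite y0 iprC /ipr ip0l hnorm0 mulr0.
move=> /eqP ny0; have yy0 : 0 < ipr y y.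
  by rewrite lt0r ipr_ge0 andbT; apply/eqP => /eqP; rewrite -hnorm_sqr sqrf_eq0 => /eqP /hnorm_eq0.
have := ipr_ge0 (rC (ipr y y) *: x - rC (ipr x y) *: y).
rewrite !(iprBl, iprBr, iprZl, iprZr) (iprC y x) => h.
have : ipr x y ^+ 2 <= (nrm x * nrm y) ^+ 2 by rewrite exprMn !hnorm_sqr; nra.
rewrite leNgt => hsq; apply/negP => hlt.
have := mulr_ge0 (hnorm_ge0 x) (hnorm_ge0 y); nra.
Qed.

Lemma hnormD_le x y : nrm (x + y) <= nrm x + nrm y.
Proof.
rewrite -(ler_pXn2r (_ : 0 < 2)%N) ?nnegrE ?addr_ge0 ?hnorm_ge0 //.
by rewrite hnormD_sqr; have := ipr_le_hnorm x y; lra.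
Qed.

Lemma hnormB_le x y : nrm (x - y) <= nrm x + nrm y.
Proof. by rewrite -(hnormN y) hnormD_le. Qed.

Lemma hnorm_subr_le x y : nrm x - nrm y <= nrm (x + y).
Proof. by have := hnormB_le (x + y) y; rewrite addrK; lra. Qed.

Lemma cvg_cauchy_seq u l : converges_to ip u l -> cauchy_seq ip u.
Proof.
move=> cvg_ul e e0; have [N cvgN] := cvg_ul _ (divr_gt0 e0 (ltr0n _ 2)).
exists N => m n hm hn.
have -> : u m - u n = (u m - l) - (u n - l) by rewrite opprB addrA subrK.
by apply: le_lt_trans (hnormB_le _ _) _; have := cvgN m hm; have := cvgN n hn; lra.
Qed.

End RealInnerProduct.

Section OperatorNorm.
Variables (R : realType) (V : lmodType R[i]) (ip : V -> V -> R[i]).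
Hypothesis hH : is_hilbert ip.
Local Notation nrm := (hnorm ip).
Local Notation bounded := (bounded_op ip).
Implicit Types (F G : V -> V) (x : V).

Lemma bounded_opP F :
  bounded F -> exists2 M, 0 <= M & forall x, nrm (F x) <= M * nrm x.
Proof.
case=> M leFM; exists (Num.max M 0); rewrite ?le_max ?lexx ?orbT // => x.
apply: le_trans (leFM x) _; rewrite ler_wpM2r ?hnorm_ge0 //.
by rewrite le_max lexx.
Qed.

Lemma bounded_opD F G : bounded F -> bounded G -> bounded (fun x => F x + G x).
Proof.
move=> /bounded_opP[M _ leFM] /bounded_opP[L _ leGL]; exists (M + L) => x.
by apply: le_trans (hnormD_le hH _ _) _; rewrite mulrDl lerD.
Qed.

Lemma bounded_opB F G : bounded F -> bounded G -> bounded (fun x => F x - G x).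
Proof.
move=> /bounded_opP[M _ leFM] /bounded_opP[L _ leGL]; exists (M + L) => x.
by apply: le_trans (hnormB_le hH _ _) _; rewrite mulrDl lerD.
Qed.

Lemma opnorm_has_sup F :
  bounded F -> has_sup [set r | exists x, nrm x <= 1 /\ r = nrm (F x)].
Proof.
move=> /bounded_opP[M M0 leFM]; split; first by exists (nrm (F 0)), 0; rewrite (hnorm0 hH).
exists M => _ [x [x1 ->]]; apply: le_trans (leFM x) _.
by rewrite ler_piMr.
Qed.

Lemma opnorm_ub F x : bounded F -> nrm x <= 1 -> nrm (F x) <= opnorm ip F.
Proof. by move=> bF x1; apply: sup_upper_bound (opnorm_has_sup bF) _ _; exists x. Qed.

Lemma opnorm_ge0 F : bounded F -> 0 <= opnorm ip F.
Proof.
move=> bF; apply: le_trans (hnorm_ge0 ip (F 0)) (opnorm_ub bF _).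
by rewrite (hnorm0 hH).
Qed.

Lemma opnorm_le_mul F c :
  0 <= c -> (forall x, nrm (F x) <= c * nrm x) -> opnorm ip F <= c.
Proof.
move=> c0 leFc; apply: ge_sup; first by exists (nrm (F 0)), 0; rewrite (hnorm0 hH).
by move=> _ [x [x1 ->]]; apply: le_trans (leFc x) _; rewrite ler_piMr.
Qed.

Lemma hnorm_le_opnorm F x :
  (forall (r : R) y, F (rC r *: y) = rC r *: F y) -> bounded F ->
  nrm (F x) <= opnorm ip F * nrm x.
Proof.
move=> homF bF; have [x0 | nx0] := eqVneq (nrm x) 0.
  have F00 : F 0 = 0 by have := homF 0 0; rewrite scaler0 /rC raddf0 scale0r.
  by rewrite x0 (hnorm_eq0 hH x0) F00 (hnorm0 hH) mulr0.
have nx_gt0 : 0 < nrm x by rewrite lt0r nx0 hnorm_ge0.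
have := opnorm_ub bF (_ : nrm (rC (nrm x)^-1 *: x) <= 1).
rewrite homF !hnormZ ?invr_ge0 ?hnorm_ge0 // mulVf // => /(_ (lexx _)).
by rewrite -(ler_pM2r nx_gt0) mulrAC mulVf // mul1r.
Qed.

Definition opnorm_maximizing F (u : nat -> V) :=
  forall n, nrm (u n) <= 1 /\ opnorm ip F - n.+1%:R^-1 < nrm (F (u n)).

Lemma exists_opnorm_maximizing F : bounded F -> exists u, opnorm_maximizing F u.
Proof.
move=> bF; suff /choice[u maxu] : forall n : nat, exists x,
    nrm x <= 1 /\ opnorm ip F - n.+1%:R^-1 < nrm (F x) by exists u.
move=> n; have n1_gt0 : 0 < n.+1%:R^-1 :> R by rewrite invr_gt0 ltr0Sn.
have [_ [x [x1 ->]] ltx] := sup_adherent n1_gt0 (opnorm_has_sup bF).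
by exists x.
Qed.

Lemma opnorm_maximizing_sub F u (phi : nat -> nat) :
  (forall n, phi n < phi n.+1)%N -> opnorm_maximizing F u ->
  opnorm_maximizing F (u \o phi).
Proof.
move=> phi_incr maxu n; have [u1 ltu] := maxu (phi n); split => //.
apply: le_lt_trans ltu; rewrite lerD2l lerN2 lef_pV2 ?posrE ?ltr0Sn // ler_nat.
rewrite ltnS; by elim: n {u1} => // n IHn; apply: leq_ltn_trans IHn (phi_incr n).
Qed.

Lemma dist_compact_ltP F r : dist_compact ip F < r ->
  exists K : {linear V -> V},
    [/\ bounded_op ip K, compact_op ip K & opnorm ip (fun x => F x - K x) < r].
Proof.
rewrite /dist_compact; set D := [set _ | _] => ltDr.
have D0 : D !=set0.
  exists (opnorm ip (fun x => F x - \0 x)), \0; split.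
    by exists 0 => x; rewrite (hnorm0 hH) mul0r.
  split=> // u _; exists id; split=> //; exists 0 => e e0; exists 0%N => n _.
  by rewrite subrr (hnorm0 hH).
by have [_ [K [bK [cK ->]]] ltKr] := inf_lt D0 ltDr; exists K.
Qed.

End OperatorNorm.

Section BoundedLinear.
Variables (R : realType) (V : lmodType R[i]) (ip : V -> V -> R[i]).
Hypothesis hH : is_hilbert ip.
Local Notation nrm := (hnorm ip).
Variable G : {linear V -> V}.
Hypothesis bG : bounded_op ip G.
Local Notation g := (opnorm ip G).
Implicit Types (x y : V) (u z : nat -> V).

Lemma opnorm_lin_ge0 : 0 <= g.
Proof. exact: (opnorm_ge0 hH bG). Qed.

Lemma hnorm_lin_le x : nrm (G x) <= g * nrm x.
Proof. by apply: (hnorm_le_opnorm hH x _ bG) => r y; rewrite linearZ. Qed.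

Lemma opnorm_lin_gt0 : ~ (forall x, G x = 0) -> 0 < g.
Proof.
move=> G_neq0; rewrite lt0r opnorm_lin_ge0 andbT; apply/eqP => g0.
apply: G_neq0 => x; apply: (hnorm_eq0 hH); apply/eqP.
by rewrite eq_le hnorm_ge0 andbT; have := hnorm_lin_le x; rewrite g0 mul0r.
Qed.

Lemma opnorm_maximizing_limit z xo :
  opnorm_maximizing ip G z -> converges_to ip z xo -> nrm xo <= 1 /\ g <= nrm (G xo).
Proof.
move=> maxz zxo; split.
  apply: (@ler_add_scaled_eps _ _ _ 1) => // e e0; have [N zNxo] := zxo e e0.
  have := hnormB_le hH (z N) (z N - xo); rewrite opprB addrC subrK.
  by have := zNxo N (leqnn N); have := (maxz N).1; lra.
apply: (@ler_add_scaled_eps _ _ _ (1 + g)) => [|e e0].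
  by have := opnorm_lin_ge0; lra.
have [N zNxo] := zxo e e0; have [k ltk] := eventually_inv_lt e0.
pose n := maxn N k; have := zNxo n (leq_maxl _ _); have := ltk n (leq_maxr _ _).
have := hnorm_lin_le (z n - xo); have := hnormD_le hH (G xo) (G (z n - xo)).
rewrite -linearD addrC subrK; have := (maxz n).2; have := opnorm_lin_ge0.
move: (n.+1%:R^-1) => q; nra.
Qed.

Variable Gadj : {linear V -> V}.
Hypothesis adjG : forall x y, ip (G x) y = ip x (Gadj y).
Let gram_defect x := Gadj (G x) - rC (g ^+ 2) *: x.

Lemma ipr_adj x y : ipr ip (G x) y = ipr ip x (Gadj y).
Proof. by rewrite /ipr adjG. Qed.

Lemma hnorm_adj_le y : nrm (Gadj y) <= g * nrm y.
Proof.
have [->|a_neq0] := eqVneq (nrm (Gadj y)) 0.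
  by rewrite mulr_ge0 ?opnorm_lin_ge0 ?hnorm_ge0.
have : nrm (Gadj y) ^+ 2 <= g * nrm y * nrm (Gadj y).
  rewrite hnorm_sqr // -ipr_adj; apply: le_trans (ipr_le_hnorm hH _ _) _.
  by rewrite mulrAC ler_wpM2r ?hnorm_ge0 ?hnorm_lin_le.
by rewrite expr2 ler_pM2r // lt0r a_neq0 hnorm_ge0.
Qed.

Lemma ipr_gram x : ipr ip (Gadj (G x)) x = nrm (G x) ^+ 2.
Proof. by rewrite iprC // -ipr_adj hnorm_sqr. Qed.

Lemma hnorm_gram_defect x :
  nrm (gram_defect x) ^+ 2 <= g ^+ 2 * (g ^+ 2 * nrm x ^+ 2 - nrm (G x) ^+ 2).
Proof.
rewrite hnormB_sqr // iprZr // ipr_gram hnormZ ?sqr_ge0 //.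
have := hnorm_adj_le (G x); have := hnorm_ge0 ip (Gadj (G x)).
have := hnorm_ge0 ip (G x); have := opnorm_lin_ge0; nra.
Qed.

Lemma hnorm_gram_lower x :
  g ^+ 2 * nrm x ^+ 2 <= nrm (G x) ^+ 2 + nrm x * nrm (gram_defect x).
Proof.
have := ipr_le_hnorm hH (- gram_defect x) x; rewrite hnormN //.
rewrite iprNl // /gram_defect iprBl // iprZl // ipr_gram !hnorm_sqr //; lra.
Qed.

Lemma hnorm_gram_defect_maximizing x e :
  nrm x <= 1 -> 0 <= e -> g - e < nrm (G x) ->
  nrm (gram_defect x) ^+ 2 <= 2 * g ^+ 3 * e.
Proof.
move=> x1 e0 ltGx; apply: le_trans (hnorm_gram_defect x) _.
have g0 := opnorm_lin_ge0; have x0 := hnorm_ge0 ip x; have Gx0 := hnorm_ge0 ip (G x).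
have leGx : nrm (G x) <= g by have := hnorm_lin_le x; nra.
have lex : g ^+ 2 * nrm x ^+ 2 <= g ^+ 2.
  by rewrite ler_piMr ?sqr_ge0 // expr_le1.
have : (g - nrm (G x)) * (g + nrm (G x)) <= e * (2 * g).
  by apply: ler_pM; lra.
have := sqr_ge0 g; nra.
Qed.

Lemma opnorm_maximizing_gram_defect u :
  opnorm_maximizing ip G u -> converges_to ip (gram_defect \o u) 0.
Proof.
move=> maxu e e0; have g0 := opnorm_lin_ge0.
have c_gt0 : 0 < 2 * g ^+ 3 + 1 by have := exprn_ge0 3 g0; lra.
have [k ltk] := eventually_inv_lt (divr_gt0 (exprn_gt0 2 e0) c_gt0).
exists k => n le_kn /=; rewrite subr0.
rewrite -(ltr_pXn2r (_ : 0 < 2)%N) ?nnegrE ?hnorm_ge0 ?ltW //.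
have q0 : 0 <= n.+1%:R^-1 :> R by rewrite invr_ge0.
have [u1 ltGu] := maxu n; have := hnorm_gram_defect_maximizing u1 q0 ltGu.
have := ltk n le_kn; rewrite ltr_pdivlMr //.
by move: (n.+1%:R^-1) q0 => q q0; nra.
Qed.

Lemma opnorm_ge_gram_perturbation (F : V -> V) (a : R) :
  0 <= a -> bounded_op ip F -> (forall x, F x = rC a *: G x + G (gram_defect x)) ->
  a * g <= opnorm ip F.
Proof.
move=> a0 bF defF; have [u maxu] := exists_opnorm_maximizing hH bG.
have g0 := opnorm_lin_ge0.
apply: (@ler_add_scaled_eps _ _ _ (a + g)) => [|e e0]; first lra.
have [N ltN] := opnorm_maximizing_gram_defect maxu e0; have [k ltk] := eventually_inv_lt e0.
pose n := maxn N k; have := ltN n (leq_maxl _ _); have := ltk n (leq_maxr _ _).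
rewrite /= subr0 => ltq ltd.
have := opnorm_ub hH bF (maxu n).1; rewrite defF.
have := hnorm_subr_le hH (rC a *: G (u n)) (G (gram_defect (u n))); rewrite hnormZ //.
have := hnorm_lin_le (gram_defect (u n)); have := (maxu n).2.
have := hnorm_ge0 ip (gram_defect (u n)); move: (n.+1%:R^-1) ltq => q ltq; nra.
Qed.

Lemma opnorm_attained_eigen x :
  0 < g -> nrm x <= 1 -> g <= nrm (G x) ->
  [/\ nrm x = 1, nrm (G x) = g & Gadj (G x) = rC (g ^+ 2) *: x].
Proof.
move=> g_gt0 x1 leGx; have leGgx := hnorm_lin_le x; have x0 := hnorm_ge0 ip x.
have nx1 : nrm x = 1 by nra.
have nGx : nrm (G x) = g by nra.
split=> //; apply/eqP; rewrite -subr_eq0; apply/eqP/(hnorm_eq0 hH).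
apply/eqP; rewrite -sqrf_eq0 eq_le sqr_ge0 andbT.
by have := hnorm_gram_defect x; rewrite nx1 nGx expr1n mulr1 subrr mulr0.
Qed.

Lemma gram_defectB x y : gram_defect (x - y) = gram_defect x - gram_defect y.
Proof.
rewrite /gram_defect (linearB G) (linearB Gadj) scalerBr !opprB addrACA [RHS]addrACA.
by rewrite [- _ + - _]addrC.
Qed.

Section CompactPerturbation.
Variable K : {linear V -> V}.
Hypothesis bK : bounded_op ip K.
Let c := opnorm ip (fun x => G x - K x).

Lemma hnorm_compact_perturbation_le w :
  nrm w <= 2 -> nrm (K w) <= 1 ->
  (g ^+ 2 - c ^+ 2) * nrm w ^+ 2 <= (4 * c + 1) * nrm (K w) + 2 * nrm (gram_defect w).
Proof.
move=> w2 Kw1; have bGK := bounded_opB hH bG bK.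
have c0 : 0 <= c := opnorm_ge0 hH bGK.
have leGw : nrm (G w) <= c * nrm w + nrm (K w).
  have homGK (r : R) x : G (rC r *: x) - K (rC r *: x) = rC r *: (G x - K x).
    by rewrite scalerBr !linearZ.
  have := hnorm_le_opnorm hH w homGK bGK.
  have := hnormD_le hH (G w - K w) (K w); rewrite subrK -/c; lra.
have := hnorm_gram_lower w.
have w0 := hnorm_ge0 ip w; have Kw0 := hnorm_ge0 ip (K w); have Gw0 := hnorm_ge0 ip (G w).
have := hnorm_ge0 ip (gram_defect w).
have : nrm (G w) ^+ 2 <= (c * nrm w + nrm (K w)) ^+ 2 by rewrite !expr2; apply: ler_pM.
have : c * nrm w * nrm (K w) <= c * 2 * nrm (K w).
  by rewrite ler_wpM2r // ler_wpM2l.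
nra.
Qed.

Lemma cauchy_compact_perturbation z :
  c < g -> (forall n, nrm (z n) <= 1) ->
  cauchy_seq ip (K \o z) -> cauchy_seq ip (gram_defect \o z) -> cauchy_seq ip z.
Proof.
move=> ltcg z1 cauchyKz cauchyDz e e0.
have c0 : 0 <= c := opnorm_ge0 hH (bounded_opB hH bG bK).
have D0 : 0 < g ^+ 2 - c ^+ 2 by rewrite subr_gt0 ltr_pXn2r ?nnegrE //; lra.
pose d := Num.min 1 ((g ^+ 2 - c ^+ 2) * e ^+ 2 / (4 * c + 3)).
have d0 : 0 < d by rewrite lt_min ltr01 divr_gt0 ?mulr_gt0 ?exprn_gt0 //; lra.
have d1 : d <= 1 by rewrite ge_min lexx.
have de : (4 * c + 3) * d <= (g ^+ 2 - c ^+ 2) * e ^+ 2.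
  by rewrite mulrC -ler_pdivlMr ?ge_min ?lexx ?orbT //; lra.
have [N1 ltKd] := cauchyKz d d0; have [N2 ltDd] := cauchyDz d d0.
exists (maxn N1 N2) => m n; rewrite !geq_max => /andP[m1 m2] /andP[n1 n2].
have := ltKd m n m1 n1; have := ltDd m n m2 n2; rewrite /= -gram_defectB -linearB.
set w := z m - z n => ltDw ltKw.
have w2 : nrm w <= 2 by have := hnormB_le hH (z m) (z n); have := z1 m; have := z1 n; lra.
have leDw := hnorm_compact_perturbation_le w2 (ltW (lt_le_trans ltKw d1)).
rewrite -(ltr_pXn2r (_ : 0 < 2)%N) ?nnegrE ?hnorm_ge0 ?ltW // -(ltr_pM2l D0).
have : (4 * c + 1) * nrm (K w) <= (4 * c + 1) * d by rewrite ler_wpM2l ?ltW //; lra.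
lra.
Qed.

Lemma opnorm_attained_compact_perturbation :
  compact_op ip K -> c < g -> exists x, nrm x <= 1 /\ g <= nrm (G x).
Proof.
move=> cK ltcg; have [u maxu] := exists_opnorm_maximizing hH bG.
have u_bnd : exists M : R, forall n, nrm (u n) <= M by exists 1 => n; apply: (maxu n).1.
have [phi [phi_incr [y Kuy]]] := cK u u_bnd.
have maxz := opnorm_maximizing_sub phi_incr maxu.
have cauchy_z := cauchy_compact_perturbation ltcg (fun n => (maxz n).1)
  (cvg_cauchy_seq hH Kuy) (cvg_cauchy_seq hH (opnorm_maximizing_gram_defect maxz)).
have [xo zxo] := ip_complete hH cauchy_z.
by exists xo; apply: opnorm_maximizing_limit maxz zxo.
Qed.

End CompactPerturbation.

Lemma opnorm_attained_of_dist_compact :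
  dist_compact ip G < g -> exists x, nrm x <= 1 /\ g <= nrm (G x).
Proof.
case/(dist_compact_ltP hH) => K [bK cK ltKg].
exact: (opnorm_attained_compact_perturbation bK cK ltKg).
Qed.

End BoundedLinear.

Section TripleProduct.
Variables (R : realType) (V : lmodType R[i]) (ip : V -> V -> R[i]).
Hypothesis hH : is_hilbert ip.
Local Notation nrm := (hnorm ip).
Variables T Tadj : {linear V -> V}.
Hypothesis bT : bounded_op ip T.
Hypothesis adjT : forall x y, ip (T x) y = ip x (Tadj y).
Local Notation g := (opnorm ip T).

Lemma ip_adjl x y : ip (Tadj x) y = ip x (T y).
Proof. by rewrite (ip_conj hH y) -adjT -(ip_conj hH). Qed.

Lemma ip_TadjT x y : ip ((T \o Tadj \o T) x) y = ip x ((Tadj \o T \o Tadj) y).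
Proof. by rewrite /= adjT ip_adjl adjT. Qed.

Lemma hnorm_TadjT_le x : nrm (T (Tadj (T x))) <= g ^+ 3 * nrm x.
Proof.
have g0 := opnorm_lin_ge0 hH bT.
have -> : g ^+ 3 * nrm x = g * (g * (g * nrm x)) by ring.
apply: le_trans (hnorm_lin_le hH bT _) _; rewrite ler_wpM2l //.
apply: le_trans (hnorm_adj_le hH bT adjT _) _; rewrite ler_wpM2l //.
exact: hnorm_lin_le.
Qed.

Lemma bounded_op_TadjT : bounded_op ip (T \o Tadj \o T).
Proof. by exists (g ^+ 3); apply: hnorm_TadjT_le. Qed.

Lemma TadjT_gram_decomposition x :
  T (Tadj (T x)) = rC (g ^+ 2) *: T x + T (Tadj (T x) - rC (g ^+ 2) *: x).
Proof. by rewrite linearB linearZ addrC subrK. Qed.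

Lemma opnorm_TadjT : opnorm ip (fun x => T (Tadj (T x))) = g ^+ 3.
Proof.
have g0 := opnorm_lin_ge0 hH bT.
apply/eqP; rewrite eq_le opnorm_le_mul ?exprn_ge0 //=; last exact: hnorm_TadjT_le.
rewrite exprSr; apply: (opnorm_ge_gram_perturbation hH bT adjT);
  [exact: sqr_ge0 | exact: bounded_op_TadjT | exact: TadjT_gram_decomposition].
Qed.

Lemma opnorm_add_TadjT : opnorm ip (fun x => T x + T (Tadj (T x))) = g + g ^+ 3.
Proof.
have g0 := opnorm_lin_ge0 hH bT.
apply/eqP; rewrite eq_le opnorm_le_mul ?addr_ge0 ?exprn_ge0 //=.
  have -> : g + g ^+ 3 = (1 + g ^+ 2) * g by rewrite mulrDl mul1r -exprSr.
  apply: (opnorm_ge_gram_perturbation hH bT adjT).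
  - by rewrite addr_ge0 ?sqr_ge0.
  - exact: (bounded_opD hH bT bounded_op_TadjT).
  - move=> x; rewrite TadjT_gram_decomposition addrA -[X in X + _ + _]scale1r.
    by rewrite -scalerDl -[1 : R[i]](rmorph1 (real_complex R)) -rmorphD.
move=> x; rewrite mulrDl; apply: le_trans (hnormD_le hH _ _) _.
by rewrite lerD ?hnorm_lin_le ?hnorm_TadjT_le.
Qed.

Lemma opnorm_attained_TadjT :
  dist_compact ip (fun x => T (Tadj (T x))) < g ^+ 3 ->
  exists x, nrm x <= 1 /\ g <= nrm (T x).
Proof.
rewrite -opnorm_TadjT => /(opnorm_attained_of_dist_compact hH bounded_op_TadjT ip_TadjT).
case=> x [x1]; rewrite opnorm_TadjT => leSx; exists x; split=> //.
have leS : g ^+ 3 <= g ^+ 2 * nrm (T x).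
  apply: le_trans leSx _; apply: le_trans (hnorm_lin_le hH bT _) _.
  by rewrite expr2 -mulrA ler_wpM2l ?opnorm_lin_ge0 ?hnorm_adj_le.
rewrite leNgt; apply/negP => ltTg.
have g_gt0 : 0 < g := le_lt_trans (hnorm_ge0 ip (T x)) ltTg.
by move: leS; rewrite exprSr ler_pM2l ?exprn_gt0 // leNgt ltTg.
Qed.

End TripleProduct.

Theorem corollary2p9 (R : realType) (V : lmodType R[i]) (ip : V -> V -> R[i])
  (hH : is_hilbert ip) (T Tadj : {linear V -> V})
  (hT : bounded_op ip T)
  (hadj : forall x y : V, ip (T x) y = ip x (Tadj y)) :
  let S := fun x : V => T (Tadj (T x)) in
  opnorm ip (fun x => T x + S x) = opnorm ip T + opnorm ip T ^+ 3 /\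
  (~ (forall x : V, T x = 0) ->
   (dist_compact ip T < opnorm ip T \/ dist_compact ip S < opnorm ip S) ->
   exists xo : V, hnorm ip xo = 1 /\
     rC (opnorm ip T)^-1 *: T xo = rC (opnorm ip S)^-1 *: S xo /\
     hnorm ip (T xo) = opnorm ip T /\
     hnorm ip (S xo) = opnorm ip S).
Proof.
move=> S; split; first exact: opnorm_add_TadjT.
rewrite /S (opnorm_TadjT hH hT hadj) => T_neq0 ltdist.
set g := opnorm ip T; have g_gt0 : 0 < g := opnorm_lin_gt0 hH hT T_neq0.
have [xo [xo1 leTxo]] : exists xo, hnorm ip xo <= 1 /\ g <= hnorm ip (T xo).
  case: ltdist; first exact: (opnorm_attained_of_dist_compact hH hT hadj).
  exact: opnorm_attained_TadjT.
have [nxo nTxo eig] := opnorm_attained_eigen hH hT hadj g_gt0 xo1 leTxo.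
have Sxo : T (Tadj (T xo)) = rC (g ^+ 2) *: T xo by rewrite eig linearZ.
exists xo; rewrite Sxo hnormZ ?sqr_ge0 // nTxo -exprSr scalerA -rmorphM.
by rewrite exprSr invfM mulrAC mulVf ?expf_neq0 ?gt_eqF // mul1r.
Qed.
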